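(* Let $M_K$ be an Oeljeklaus–Toma manifold as described in the context. For any point $x\in M_K$, the leaf $\mathcal L_x$ of the foliation $\mathcal F$ through $x$ is dense in the fiber $p^{-1}(p(x))$ (a real torus of dimension $m+1$). Equivalently, for any $t=(t_1,\dots,t_m)\in\mathbb{H}^{m-1}\times\mathbb{C}$, the set $\pi(\{(t_1,\dots,t_{m-1})\}\times\mathbb{C})$ is dense in the fiber of $p$ over $p(\pi(t))\in\mathbb{T}^{m-1}$.
   Context: Let $K$ be a number field of degree $n=s+2$ over $\mathbb{Q}$ with $s\ge 1$, having exactly $s$ real embeddings $\sigma_1,\dots,\sigma_s$ and exactly one pair of complex conjugate embeddings $\sigma_{s+1},\sigma_{s+2}=\overline{\sigma_{s+1}}$; put $m=s+1$. Let $O_K$ be its ring of integers and $O_K^{*,+}$ the group of units $a$ with $\sigma_i(a)>0$ for $1\le i\le s$. Let $G\subset O_K^{*,+}$ be an admissible subgroup, i.e. a subgroup of rank $s$ such that $\Lambda=\{(\log\sigma_1(a),\dots,\log\sigma_s(a)):a\in G\}$ is a full lattice in $\mathbb{R}^{m-1}$. With $\mathbb{H}$ the upper half plane, $b\in O_K$ acts on $\mathbb{H}^{m-1}\times\mathbb{C}$ by $z\mapsto z+(\sigma_1(b),\dots,\sigma_m(b))$ and $a\in G$ by $z\mapsto(\sigma_1(a)z_1,\dots,\sigma_m(a)z_m)$; the generated group $\Gamma=G\ltimes O_K$ acts freely and properly discontinuously and $M_K=(\mathbb{H}^{m-1}\times\mathbb{C})/\Gamma$ with covering map $\pi$. Write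 $z_j=x_j+\sqrt{-1}y_j$. The map $z\mapsto(\log y_1,\dots,\log y_{m-1})$ induces a fiber bundle projection $p:M_K\to\mathbb{T}^{m-1}=\mathbb{R}^{m-1}/\Lambda$ with fibers real tori $\mathbb{T}^{m+1}$. The foliation of $\mathbb{H}^{m-1}\times\mathbb{C}$ with leaves $\{z'\}\times\mathbb{C}$ is $\Gamma$-invariant and induces a nonsingular holomorphic foliation $\mathcal F$ on $M_K$ whose leaves are the images under $\pi$ of these leaves. *)

From HB Require Import structures.
From mathcomp Require Import all_boot all_order all_algebra all_field.
From mathcomp Require Import complex.
From mathcomp Require Import all_classical all_reals all_analysis.

Set Implicit Arguments.
Unset Strict Implicit.
Unset Printing Implicit Defensive.

Import Order.TTheory GRing.Theory Num.Theory.
Local Open Scope ring_scope.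
Local Open Scope classical_set_scope.

Definition ring_of_integers (K : fieldType) : set K :=
  (fun a : K => exists p : {poly int}, p \is monic /\ root (map_poly (intr : int -> K) p) a).

Definition totally_positive_units (R : realType) (s : nat) (K : fieldType)
  (sigmaR : 'I_s -> {rmorphism K -> R}) : set K :=
  fun a : K => [/\ a != 0, @ring_of_integers K a, @ring_of_integers K a^-1
             & forall j, 0 < sigmaR j a].

Definition log_lattice (R : realType) (s : nat) (K : fieldType)
  (sigmaR : 'I_s -> {rmorphism K -> R}) (G : set K) : set 'rV[R]_s :=
  fun v : 'rV[R]_s => exists2 a, G a & v = \row_j ln (sigmaR j a).

Definition full_lattice (R : realType) (s : nat) (L : set 'rV[R]_s) : Prop :=
  exists B : 'M[R]_s, B \in unitmx /\
    L = (fun v : 'rV[R]_s => exists k : 'rV[int]_s, v = map_mx (intr : int -> R) k *m B).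

(* admissible subgroup G of O_K^{*,+} (its rank is then automatically s,
   since a -> Lambda is injective) *)
Definition admissible (R : realType) (s : nat) (K : fieldType)
  (sigmaR : 'I_s -> {rmorphism K -> R}) (G : set K) : Prop :=
  [/\ G 1, (forall a b, G a -> G b -> G (a * b)),
      (forall a, G a -> G a^-1),
      G `<=` totally_positive_units sigmaR
    & full_lattice (log_lattice sigmaR G)].

(* Points of H^{m-1} x C with m = s+1 : (z_1..z_s, z_m) *)
Definition pt (R : realType) (s : nat) : Type := ('I_s -> R[i]) * R[i].

Definition in_HC (R : realType) (s : nat) (z : pt R s) : Prop :=
  forall j, 0 < complex.Im (z.1 j).

(* The action of the element of Gamma = G |x O_K given by
   z |-> sigma(a) z + sigma(b); every element of Gamma has this form. *)
Definition gact (R : realType) (s : nat) (K : fieldType)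
  (sigmaR : 'I_s -> {rmorphism K -> R}) (sigmaC : {rmorphism K -> R[i]})
  (a b : K) (z : pt R s) : pt R s :=
  (fun j => ((sigmaR j a)%:C * z.1 j + (sigmaR j b)%:C)%C,
   sigmaC a * z.2 + sigmaC b).

(* pi^{-1}( pi( {t'} x C ) ) : Gamma-saturation of the leaf through t *)
Definition saturated_leaf (R : realType) (s : nat) (K : fieldType)
  (sigmaR : 'I_s -> {rmorphism K -> R}) (sigmaC : {rmorphism K -> R[i]})
  (G : set K) (t : pt R s) : set (pt R s) :=
  fun w : pt R s => exists a b z, [/\ G a, @ring_of_integers K b
                           & w = gact sigmaR sigmaC a b (t.1, z)].

(* the lift to H^{m-1} x C of p : z |-> (log y_1, ..., log y_{m-1}) *)
Definition logy (R : realType) (s : nat) (z : pt R s) : 'rV[R]_s :=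
  \row_j ln (complex.Im (z.1 j)).

(* pi^{-1}( p^{-1}( p(pi t) ) ) : points whose image in T^{m-1} = R^{m-1}/Lambda
   is the same as that of t *)
Definition fiber_preimage (R : realType) (s : nat) (K : fieldType)
  (sigmaR : 'I_s -> {rmorphism K -> R}) (G : set K) (t : pt R s) : set (pt R s) :=
  fun w : pt R s => in_HC w /\ log_lattice sigmaR G (logy w - logy t).

Definition cabs (R : realType) (z : R[i]) : R :=
  Num.sqrt (complex.Re z ^+ 2 + complex.Im z ^+ 2).

Definition dense_in (R : realType) (s : nat) (A B : set (pt R s)) : Prop :=
  forall w, B w -> forall e : R, 0 < e ->
    exists2 v, A v & (forall j, cabs (v.1 j - w.1 j) < e) /\ cabs (v.2 - w.2) < e.

(* A point w of the fibre has Im w_j = sigma_j(a0) Im t_j for some a0 in G,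
   so the image of the leaf under (a0, b) agrees with w in the imaginary parts
   and, for a suitable z, in the last coordinate; only the real parts
   Re w_j - sigma_j(a0) Re t_j remain to be approximated by sigma_j(b), b in O_K.
   As Lambda is a full lattice, it contains a vector with negative pairwise
   distinct coordinates: some a in G has distinct sigma_j(a) in (0,1). For
   b = sum_i n_i a^(i+k) with n in Z^s, the vectors (sigma_j(b))_j form the
   lattice spanned by the rows of the invertible matrix (sigma_j(a)^(i+k))_(i,j),
   whose entries tend to 0 with k; hence they are eps-dense in R^s. *)

From HB Require Import structures.
From mathcomp Require Import all_boot all_order all_algebra all_field.
From mathcomp Require Import complex.
From mathcomp Require Import all_classical all_reals all_analysis.
From mathcomp Require Import lra.

Set Implicit Arguments.
Unset Strict Implicit.
Unset Printing Implicit Defensive.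

Import Order.TTheory GRing.Theory Num.Theory.
Local Open Scope ring_scope.
Local Open Scope classical_set_scope.

Lemma floor_dist_le1 (R : archiRealFieldType) (x : R) : `|(Num.floor x)%:~R - x| <= 1.
Proof.
have := floor_le x; have := floorD1_gt x; rewrite intrD rmorph1 => h1 h2.
by rewrite ler_norml; apply/andP; split; lra.
Qed.

Lemma int_comb_near (R : archiRealFieldType) (n : nat) (B : 'M[R]_n) (y : 'rV[R]_n) :
  B \in unitmx -> exists k : 'rV[int]_n,
    forall j, `|(map_mx intr k *m B) 0 j - y 0 j| <= \sum_i `|B i j|.
Proof.
move=> unitB; set x := y *m invmx B.
exists (\row_i Num.floor (x 0 i)) => j.
set kR := map_mx intr _.
have -> : (kR *m B) 0 j - y 0 j = ((kR - x) *m B) 0 j.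
  by rewrite mulmxBl mulmxKV // !mxE.
rewrite mxE; apply: (le_trans (ler_norm_sum _ _ _)); apply: ler_sum => i _.
by rewrite normrM -[X in _ <= X]mul1r ler_wpM2r // !mxE floor_dist_le1.
Qed.

Lemma exists_common_exprn_lt (R : realType) (I : finType) (u : I -> R) (eps : R) :
  (forall j, `|u j| < 1) -> 0 < eps -> exists k : nat, forall j, `|u j ^+ k| < eps.
Proof.
move=> u1 eps0.
have /filter_ex[k hk] : \forall k \near \oo, forall j, `|u j ^+ k| < eps.
  apply: filter_forall => j.
  have /cvgrPdist_lt/(_ _ eps0) := cvg_expr (u1 j).
  by apply: filterS => k; rewrite sub0r normrN.
by exists k.
Qed.

Lemma shifted_Vandermonde_unit (F : fieldType) (n k : nat) (u : 'I_n -> F) :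
  injective u -> (forall j, u j != 0) -> \matrix_(i, j) u j ^+ (i + k) \in unitmx.
Proof.
move=> uinj u0.
have -> : \matrix_(i, j) u j ^+ (i + k) =
          Vandermonde n (\row_j u j) *m diag_mx (\row_j u j ^+ k).
  by apply/matrixP => i j; rewrite mul_mx_diag !mxE exprD.
rewrite unitmxE unitfE det_mulmx det_diag det_Vandermonde mulf_neq0 //.
  apply/prodf_neq0 => i _; apply/prodf_neq0 => j ltij; rewrite !mxE subr_eq0.
  by apply/eqP => /uinj eq_ji; move: ltij; rewrite eq_ji ltnn.
by apply/prodf_neq0 => i _; rewrite mxE expf_neq0.
Qed.

Lemma int_comb_powers_dense (R : realType) (s : nat) (u : 'I_s -> R) :
  (forall j, 0 < `|u j| < 1) -> injective u ->
  forall (r : 'I_s -> R) (e : R), 0 < e ->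
  exists (n : 'I_s -> int) (k : nat), forall j,
    `|\sum_i (n i)%:~R * u j ^+ (i + k) - r j| < e.
Proof.
move=> u01 uinj r e e0.
have u1 j : `|u j| < 1 by case/andP: (u01 j).
have u0 j : u j != 0 by rewrite -normr_gt0; case/andP: (u01 j).
set eps := e / (s%:R + 1).
have eps0 : 0 < eps by rewrite divr_gt0 // ltr_wpDl.
have [k small] := exists_common_exprn_lt u1 eps0.
have [n near] := int_comb_near (\row_j r j) (shifted_Vandermonde_unit k uinj u0).
exists (fun i => n 0 i), k => j.
have := near j; rewrite !mxE; under eq_bigr do rewrite !mxE.
move=> /le_lt_trans; apply.
apply: (@le_lt_trans _ _ (\sum_(i < s) `|u j ^+ k|)).
  apply: ler_sum => i _; rewrite mxE !normrX exprD -[X in _ <= X]mul1r.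
  by rewrite ler_wpM2r ?exprn_ge0 // exprn_ile1 // ltW.
rewrite sumr_const card_ord -mulr_natl.
apply: (@le_lt_trans _ _ (s%:R * eps)); first by rewrite ler_wpM2l // ltW.
rewrite /eps mulrCA gtr_pMr // ltr_pdivrMr ?ltr_wpDl // mul1r; lra.
Qed.

Lemma natr_dist_lt1 (R : realDomainType) (i j : nat) :
  `|i%:R - j%:R : R| < 1 -> i = j.
Proof.
rewrite ltr_norml => /andP[h1 h2].
case: (ltngtP i j) => // [ij|ji]; exfalso; [move: ij | move: ji];
  rewrite -(ler_nat R) -natr1 => ?; lra.
Qed.

Lemma full_lattice_neg_inj (R : realType) (s : nat) (L : set 'rV[R]_s) :
  full_lattice L ->
  exists2 v, L v & (forall j, v 0 j < 0) /\ injective (fun j => v 0 j).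
Proof.
move=> [B [unitB ->]].
set C := 1 + \sum_j \sum_i `|B i j|.
have colC j : \sum_i `|B i j| < C.
  rewrite /C [X in _ < 1 + X](bigD1 j) //=.
  have : 0 <= \sum_(j' | j' != j) \sum_i `|B i j'|.
    by apply: sumr_ge0 => j' _; apply: sumr_ge0.
  lra.
have C0 : 0 < C.
  by rewrite /C ltr_pwDl // sumr_ge0 // => j _; apply: sumr_ge0.
(* Targets 2C apart, each approximated within C. *)
have [k near] := int_comb_near (\row_j (- (C + 2 * C * j%:R))) unitB.
exists (map_mx intr k *m B); first by exists k.
have near' j : `|(map_mx intr k *m B) 0 j + (C + 2 * C * j%:R)| < C.
  by have := near j; rewrite [X in `|_ - X|]mxE opprK => /le_lt_trans; apply.
split=> [j | i j /= eq_ij].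
  have := near' j; rewrite ltr_norml => /andP[_ h].
  have : 0 <= C * j%:R by rewrite mulr_ge0 // ltW.
  lra.
apply: val_inj; apply: (@natr_dist_lt1 R).
have := near' i; have := near' j; rewrite eq_ij !ltr_norml => /andP[h1 h2] /andP[h3 h4].
by apply/andP; split; rewrite -(ltr_pM2l C0) ?mulrN1 ?mulr1 mulrBr; lra.
Qed.

Lemma ring_of_integersP (K : fieldType) (a : K) :
  ring_of_integers a <-> integralOver (intr : int -> K) a.
Proof. by split=> [[p [? ?]] | [p ? ?]]; exists p. Qed.

Lemma ring_of_integers_int_comb_powers (K : fieldType) (s : nat) (a : K)
    (n : 'I_s -> int) (e : 'I_s -> nat) :
  ring_of_integers a -> ring_of_integers (\sum_i (n i)%:~R * a ^+ e i).
Proof.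
move=> /ring_of_integersP inta; apply/ring_of_integersP.
elim/big_ind: _ => [|x y|i _]; first exact: (@mxpoly.integral0 _ K intr).
  exact: (@mxpoly.integral_add _ K intr).
apply: (@mxpoly.integral_mul _ K intr); first exact: (@mxpoly.integral_id _ K intr).
elim: (e i) => [|m IH]; first by rewrite expr0; apply: (@mxpoly.integral1 _ K intr).
by rewrite exprS; apply: (@mxpoly.integral_mul _ K intr).
Qed.

Lemma admissible_contracting_unit (R : realType) (s : nat) (K : fieldType)
    (sigmaR : 'I_s -> {rmorphism K -> R}) (G : set K) :
  admissible sigmaR G ->
  exists2 a, G a & (forall j, 0 < sigmaR j a < 1) /\ injective (fun j => sigmaR j a).
Proof.
case=> _ _ _ Gpos /full_lattice_neg_inj[_ [a Ga ->]]; rewrite /= => -[neg inj].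
have [_ _ _ a_pos] := Gpos a Ga.
exists a => //; split=> [j | i j eq_ij]; last by apply: inj; rewrite !mxE eq_ij.
rewrite a_pos /= ltNge; apply/negP => /ln_ge0.
by have := neg j; rewrite mxE => /lt_geF ->.
Qed.

Lemma fiber_preimage_Im (R : realType) (s : nat) (K : fieldType)
    (sigmaR : 'I_s -> {rmorphism K -> R}) (G : set K) (t w : pt R s) :
  G `<=` totally_positive_units sigmaR -> in_HC t -> fiber_preimage sigmaR G t w ->
  exists2 a, G a & forall j, complex.Im (w.1 j) = sigmaR j a * complex.Im (t.1 j).
Proof.
move=> Gpos t_pos [w_pos [a Ga log_wt]]; exists a => // j.
have [_ _ _ a_pos] := Gpos a Ga.
have := congr1 (fun v : 'rV_s => v 0 j) log_wt; rewrite /= /logy !mxE => ln_eq.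
apply: ln_inj; rewrite ?posrE ?mulr_gt0 //.
by rewrite lnM ?posrE // -ln_eq subrK.
Qed.

Lemma cabs_real (R : realType) (z : R[i]) : complex.Im z = 0 -> cabs z = `|complex.Re z|.
Proof. by rewrite /cabs => ->; rewrite expr0n addr0 sqrtr_sqr. Qed.

Theorem lemma2p1 (R : realType) (s : nat) (K : fieldExtType rat)
  (sigmaR : 'I_s -> {rmorphism K -> R}) (sigmaC : {rmorphism K -> R[i]})
  (G : set K)
  (hs : (0 < s)%N)
  (hdim : \dim {: K} = s.+2)
  (hR_inj : forall i j, (forall a, sigmaR i a = sigmaR j a) -> i = j)
  (hR_all : forall f : {rmorphism K -> R}, exists j, forall a, f a = sigmaR j a)
  (hC_nonreal : exists a, complex.Im (sigmaC a) != 0)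
  (hC_all : forall f : {rmorphism K -> R[i]},
      [\/ exists j, forall a, f a = ((sigmaR j a)%:C)%C,
          forall a, f a = sigmaC a
        | forall a, f a = ((sigmaC a)^*)%C])
  (hG : admissible sigmaR G)
  (t : pt R s) (ht : in_HC t) :
  dense_in (saturated_leaf sigmaR sigmaC G t) (fiber_preimage sigmaR G t).
Proof.
move=> w fiber_w e e0.
have Gpos : G `<=` totally_positive_units sigmaR by case: hG.
have [a0 Ga0 Im_w] := fiber_preimage_Im Gpos ht fiber_w.
have [a Ga [a01 a_inj]] := admissible_contracting_unit hG.
have a01' j : 0 < `|sigmaR j a| < 1 by rewrite gtr0_norm; case/andP: (a01 j).
have [n [k approx]] := int_comb_powers_dense a01' a_inj
  (fun j => complex.Re (w.1 j) - sigmaR j a0 * complex.Re (t.1 j)) e0.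
set b := \sum_i (n i)%:~R * a ^+ (i + k).
have [_ Oa _ _] := Gpos a Ga.
have sigma_b j : sigmaR j b = \sum_i (n i)%:~R * sigmaR j a ^+ (i + k).
  by rewrite rmorph_sum; apply: eq_bigr => i _; rewrite rmorphM rmorph_int rmorphXn.
have [a0_neq0 _ _ _] := Gpos a0 Ga0.
set z := (w.2 - sigmaC b) / sigmaC a0.
exists (gact sigmaR sigmaC a0 b (t.1, z)).
  by exists a0, b, z; split=> //; apply: ring_of_integers_int_comb_powers.
split=> [j|]; last first.
  by rewrite /gact /= /z mulrC divfK ?fmorph_eq0 // subrK subrr cabs_real // normr0.
move: (Im_w j) (approx j); rewrite -sigma_b /gact /=.
case: (w.1 j) => wr wi; case: (t.1 j) => tr ti /= ->.
rewrite cabs_real /= ?mul0r ?subr0 ?addr0 ?subrr //.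
by rewrite opprB addrCA addrA.
Qed.
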